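(* Let $n\neq 1$ be a real number, $k_n=n-1$, and $k_0,k_1,k_2\in\mathbb{R}$. On the phase space with canonical coordinates $(r,\phi,p_r,p_\phi)$, $r>0$, restricted to the open set where $\sin(k_n\phi)\neq 0$, consider $$H_{nc1}=\tfrac12 r^{2n}\Big(p_r^2+\tfrac{p_\phi^2}{r^2}\Big)+k_0r^{n-1}+r^{2k_n}\Big(\frac{k_1}{\sin^2(k_n\phi)}+k_2\frac{\cos(k_n\phi)}{\sin^2(k_n\phi)}\Big).$$ With $P_2=r^n\big(p_r\sin(k_n\phi)-\tfrac1r p_\phi\cos(k_n\phi)\big)$, define $$J_{c2}=p_\phi^2+2\Big(\frac{k_1}{\sin^2(k_n\phi)}+k_2\frac{\cos(k_n\phi)}{\sin^2(k_n\phi)}\Big),$$ $$J_{c3}=P_2p_\phi-k_0\cos(k_n\phi)-2k_1r^{k_n}\csc(k_n\phi)\cot(k_n\phi)-k_2r^{k_n}\big(\csc^2(k_n\phi)+\cot^2(k_n\phi)\big).$$ Then $\{J_{c2},H_{nc1}\}=0$, $\{J_{c3},H_{nc1}\}=0$, and $dJ_{c2}\wedge dJ_{c3}\wedge dH_{nc1}\neq 0$; hence $H_{nc1}$ is superintegrable.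
   Context: The Poisson bracket is the canonical one in $(r,\phi,p_r,p_\phi)$. *)

From Stdlib Require Import Reals.
From Coquelicot Require Import Coquelicot.
Open Scope R_scope.

Definition Fn := R -> R -> R -> R -> R.

Definition d_r (F : Fn) : Fn := fun r ph pr pph => Derive (fun t => F t ph pr pph) r.
Definition d_phi (F : Fn) : Fn := fun r ph pr pph => Derive (fun t => F r t pr pph) ph.
Definition d_pr (F : Fn) : Fn := fun r ph pr pph => Derive (fun t => F r ph t pph) pr.
Definition d_pphi (F : Fn) : Fn := fun r ph pr pph => Derive (fun t => F r ph pr t) pph.

Definition pbracket (F G : Fn) : Fn := fun r ph pr pph =>
  d_r F r ph pr pph * d_pr G r ph pr pph - d_pr F r ph pr pph * d_r G r ph pr pph
  + d_phi F r ph pr pph * d_pphi G r ph pr pph - d_pphi F r ph pr pph * d_phi G r ph pr pph.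

Definition dcomp (F : Fn) (i : nat) : Fn :=
  match i with
  | 0%nat => d_r F | 1%nat => d_phi F | 2%nat => d_pr F | _ => d_pphi F
  end.

Definition det3 (a11 a12 a13 a21 a22 a23 a31 a32 a33 : R) : R :=
  a11 * (a22 * a33 - a23 * a32) - a12 * (a21 * a33 - a23 * a31)
  + a13 * (a21 * a32 - a22 * a31).

Definition wedge3_comp (F G K : Fn) (i j k : nat) : Fn := fun r ph pr pph =>
  det3 (dcomp F i r ph pr pph) (dcomp F j r ph pr pph) (dcomp F k r ph pr pph)
       (dcomp G i r ph pr pph) (dcomp G j r ph pr pph) (dcomp G k r ph pr pph)
       (dcomp K i r ph pr pph) (dcomp K j r ph pr pph) (dcomp K k r ph pr pph).

Definition wedge3_nonzero_at (F G K : Fn) (r ph pr pph : R) : Prop :=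
  exists i j k : nat, (i < j)%nat /\ (j < k)%nat /\ (k < 4)%nat /\
    wedge3_comp F G K i j k r ph pr pph <> 0.

Definition Vang (n k1 k2 ph : R) : R :=
  k1 / (sin ((n - 1) * ph)) ^ 2 + k2 * cos ((n - 1) * ph) / (sin ((n - 1) * ph)) ^ 2.

Definition H_nc1 (n k0 k1 k2 : R) : Fn := fun r ph pr pph =>
  / 2 * Rpower r (2 * n) * (pr ^ 2 + pph ^ 2 / r ^ 2)
  + k0 * Rpower r (n - 1)
  + Rpower r (2 * (n - 1)) * Vang n k1 k2 ph.

Definition P2 (n : R) : Fn := fun r ph pr pph =>
  Rpower r n * (pr * sin ((n - 1) * ph) - / r * pph * cos ((n - 1) * ph)).

Definition J_c2 (n k1 k2 : R) : Fn := fun r ph pr pph =>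
  pph ^ 2 + 2 * Vang n k1 k2 ph.

Definition csc (x : R) : R := / sin x.
Definition cot (x : R) : R := cos x / sin x.

Definition J_c3 (n k0 k1 k2 : R) : Fn := fun r ph pr pph =>
  P2 n r ph pr pph * pph - k0 * cos ((n - 1) * ph)
  - 2 * k1 * Rpower r (n - 1) * csc ((n - 1) * ph) * cot ((n - 1) * ph)
  - k2 * Rpower r (n - 1) * (csc ((n - 1) * ph) ^ 2 + cot ((n - 1) * ph) ^ 2).

(* Every function involved is a polynomial in [p_r], [p_phi], [1/r], [r^(n-1)] and the
   trigonometric functions of [(n-1) phi], so all partial derivatives are explicit and
   both brackets reduce to rational identities in these quantities; the one for [J_c3]
   holds modulo [sin^2 + cos^2 = 1].  Functional independence is witnessed at
   [r = 1], [(n-1) phi = pi/2], [p_r = 0], where the [(r, p_r, p_phi)]-component of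
   [dJ_c2 ^ dJ_c3 ^ dH_nc1] is [-2 (n-1) p_phi^2 (p_phi^2 + k0 + 2 k1)]. *)
From Stdlib Require Import Reals Lra Lia.
From Coquelicot Require Import Coquelicot.
Open Scope R_scope.

Lemma exp_2n_ln (n r : R) : 0 < r -> exp (2 * n * ln r) = exp ((n - 1) * ln r) ^ 2 * r ^ 2.
Proof.
intros hr. replace (2 * n * ln r) with ((n - 1) * ln r + (n - 1) * ln r + ln r + ln r) by ring.
rewrite !exp_plus, exp_ln by exact hr. ring.
Qed.

Lemma exp_n_ln (n r : R) : 0 < r -> exp (n * ln r) = exp ((n - 1) * ln r) * r.
Proof.
intros hr. replace (n * ln r) with ((n - 1) * ln r + ln r) by ring.
rewrite exp_plus, exp_ln by exact hr. reflexivity.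
Qed.

Lemma exp_2nm1_ln (n r : R) : exp (2 * (n - 1) * ln r) = exp ((n - 1) * ln r) ^ 2.
Proof.
replace (2 * (n - 1) * ln r) with ((n - 1) * ln r + (n - 1) * ln r) by ring.
rewrite exp_plus. ring.
Qed.

(* Differentiate with [auto_derive], then express every power of [r] through [r^(n-1)]. *)
Ltac compute_derive n r :=
  unfold Vang; apply is_derive_unique; auto_derive;
  [ repeat split; auto; try nra
  | rewrite ?(exp_2n_ln n r), ?(exp_n_ln n r), ?(exp_2nm1_ln n r) by auto;
    field; repeat split; auto; try nra ].

Section PartialDerivatives.
Variables (n k0 k1 k2 r ph pr pph : R).
Hypotheses (hr : 0 < r) (hs : sin ((n - 1) * ph) <> 0).

Let m := n - 1.
Let E := Rpower r m.
Let s := sin (m * ph).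
Let c := cos (m * ph).
Let V := (k1 + k2 * c) / s ^ 2.
Let dV := - m * (k2 * s ^ 2 + 2 * c * (k1 + k2 * c)) / s ^ 3.

Lemma d_r_H_nc1 : d_r (H_nc1 n k0 k1 k2) r ph pr pph =
  n * E ^ 2 * r * pr ^ 2 + m * E ^ 2 * pph ^ 2 / r + k0 * m * E / r + 2 * m * E ^ 2 * V / r.
Proof. unfold d_r, H_nc1, E, V, c, s, m, Rpower. compute_derive n r. Qed.

Lemma d_phi_H_nc1 : d_phi (H_nc1 n k0 k1 k2) r ph pr pph = E ^ 2 * dV.
Proof. unfold d_phi, H_nc1, E, dV, c, s, m, Rpower. compute_derive n r. Qed.

Lemma d_pr_H_nc1 : d_pr (H_nc1 n k0 k1 k2) r ph pr pph = E ^ 2 * r ^ 2 * pr.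
Proof. unfold d_pr, H_nc1, E, m, Rpower. compute_derive n r. Qed.

Lemma d_pphi_H_nc1 : d_pphi (H_nc1 n k0 k1 k2) r ph pr pph = E ^ 2 * pph.
Proof. unfold d_pphi, H_nc1, E, m, Rpower. compute_derive n r. Qed.

Lemma d_r_J_c2 : d_r (J_c2 n k1 k2) r ph pr pph = 0.
Proof. unfold d_r, J_c2. compute_derive n r. Qed.

Lemma d_phi_J_c2 : d_phi (J_c2 n k1 k2) r ph pr pph = 2 * dV.
Proof. unfold d_phi, J_c2, dV, c, s, m. compute_derive n r. Qed.

Lemma d_pr_J_c2 : d_pr (J_c2 n k1 k2) r ph pr pph = 0.
Proof. unfold d_pr, J_c2. compute_derive n r. Qed.

Lemma d_pphi_J_c2 : d_pphi (J_c2 n k1 k2) r ph pr pph = 2 * pph.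
Proof. unfold d_pphi, J_c2. compute_derive n r. Qed.

Lemma d_r_J_c3 : d_r (J_c3 n k0 k1 k2) r ph pr pph =
  n * E * (pr * s - pph * c / r) * pph + E * pph ^ 2 * c / r
  - 2 * k1 * m * E * c / (r * s ^ 2) - k2 * m * E * (1 + c ^ 2) / (r * s ^ 2).
Proof. unfold d_r, J_c3, P2, csc, cot, E, c, s, m, Rpower. compute_derive n r. Qed.

Lemma d_phi_J_c3 : d_phi (J_c3 n k0 k1 k2) r ph pr pph =
  m * E * pph * (r * pr * c + pph * s) + k0 * m * s
  + 2 * k1 * m * E * (s ^ 2 + 2 * c ^ 2) / s ^ 3 + 2 * k2 * m * E * c * (s ^ 2 + 1 + c ^ 2) / s ^ 3.
Proof. unfold d_phi, J_c3, P2, csc, cot, E, c, s, m, Rpower. compute_derive n r. Qed.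

Lemma d_pr_J_c3 : d_pr (J_c3 n k0 k1 k2) r ph pr pph = E * r * s * pph.
Proof. unfold d_pr, J_c3, P2, csc, cot, E, s, m, Rpower. compute_derive n r. Qed.

Lemma d_pphi_J_c3 : d_pphi (J_c3 n k0 k1 k2) r ph pr pph = E * r * pr * s - 2 * E * c * pph.
Proof. unfold d_pphi, J_c3, P2, csc, cot, E, c, s, m, Rpower. compute_derive n r. Qed.

Lemma pbracket_J_c2_H_nc1 : pbracket (J_c2 n k1 k2) (H_nc1 n k0 k1 k2) r ph pr pph = 0.
Proof.
unfold pbracket.
rewrite d_r_J_c2, d_phi_J_c2, d_pr_J_c2, d_pphi_J_c2, d_phi_H_nc1, d_pphi_H_nc1.
ring.
Qed.

Lemma pbracket_J_c3_H_nc1 : pbracket (J_c3 n k0 k1 k2) (H_nc1 n k0 k1 k2) r ph pr pph = 0.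
Proof.
unfold pbracket.
rewrite d_r_J_c3, d_phi_J_c3, d_pr_J_c3, d_pphi_J_c3.
rewrite d_r_H_nc1, d_phi_H_nc1, d_pr_H_nc1, d_pphi_H_nc1.
assert (pythagoras : s ^ 2 + c ^ 2 - 1 = 0).
{ unfold s, c. rewrite <- (sin2_cos2 (m * ph)). unfold Rsqr. ring. }
transitivity ((s ^ 2 + c ^ 2 - 1) * (m * E ^ 3 * k2 * (pr * s * r - 2 * pph * c)) / s ^ 3).
- unfold dV, V, m. field. split; [exact hs | lra].
- rewrite pythagoras. field. exact hs.
Qed.

End PartialDerivatives.

Lemma sin_quarter_turn (m : R) : m <> 0 -> sin (m * (PI / 2 / m)) = 1.
Proof.
intros hm. replace (m * (PI / 2 / m)) with (PI / 2) by (field; exact hm).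
exact sin_PI2.
Qed.

Lemma wedge3_nonzero_at_witness (n k0 k1 k2 : R) : n <> 1 ->
  wedge3_nonzero_at (J_c2 n k1 k2) (J_c3 n k0 k1 k2) (H_nc1 n k0 k1 k2)
    1 (PI / 2 / (n - 1)) 0 (Rabs k0 + 2 * Rabs k1 + 1).
Proof.
intros hn. set (a := Rabs k0 + 2 * Rabs k1 + 1).
assert (quarter_turn : (n - 1) * (PI / 2 / (n - 1)) = PI / 2) by (field; lra).
assert (hs : sin ((n - 1) * (PI / 2 / (n - 1))) <> 0) by (rewrite sin_quarter_turn; lra).
exists 0%nat, 2%nat, 3%nat. split; [lia | split; [lia | split; [lia |]]].
unfold wedge3_comp, det3, dcomp.
rewrite d_r_J_c2, d_pr_J_c2, d_pphi_J_c2, d_pr_J_c3, d_pphi_J_c3,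
  d_r_H_nc1, d_pr_H_nc1, d_pphi_H_nc1 by (lra || exact hs).
rewrite quarter_turn, sin_PI2, cos_PI2.
replace (Rpower 1 (n - 1)) with 1 by (unfold Rpower; rewrite ln_1, Rmult_0_r, exp_0; reflexivity).
match goal with |- ?X <> 0 => replace X with (-2 * (n - 1) * a ^ 2 * (a ^ 2 + k0 + 2 * k1)) by (field; lra) end.
assert (ha : 1 <= a) by (unfold a; pose proof (Rabs_pos k0); pose proof (Rabs_pos k1); lra).
assert (hk : 0 < a ^ 2 + k0 + 2 * k1).
{ pose proof (Rle_abs (- k0)); pose proof (Rle_abs (- k1)); rewrite !Rabs_Ropp in *.
  unfold a in *; nra. }
repeat apply Rmult_integral_contrapositive_currified; lra.
Qed.

Theorem mainTheorem7 (n k0 k1 k2 : R) (hn : n <> 1) :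
  (forall r ph pr pph, 0 < r -> sin ((n - 1) * ph) <> 0 ->
     pbracket (J_c2 n k1 k2) (H_nc1 n k0 k1 k2) r ph pr pph = 0 /\
     pbracket (J_c3 n k0 k1 k2) (H_nc1 n k0 k1 k2) r ph pr pph = 0) /\
  (exists r ph pr pph, 0 < r /\ sin ((n - 1) * ph) <> 0 /\
     wedge3_nonzero_at (J_c2 n k1 k2) (J_c3 n k0 k1 k2) (H_nc1 n k0 k1 k2) r ph pr pph).
Proof.
split.
- intros r ph pr pph hr hs.
  split; [apply pbracket_J_c2_H_nc1 | apply pbracket_J_c3_H_nc1]; assumption.
- exists 1, (PI / 2 / (n - 1)), 0, (Rabs k0 + 2 * Rabs k1 + 1).
  rewrite sin_quarter_turn by lra.
  split; [lra | split; [lra | exact (wedge3_nonzero_at_witness n k0 k1 k2 hn)]].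
Qed.
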